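(* Let $M\ge 2$ and let $L^{(1)},\dots,L^{(M)}$ and $L=\sum_{l=1}^{M}L^{(l)}$ be the $N^{(1)}\times N^{(1)}$ matrices of a hierarchical system as described in the context. Then \[ \lambda(L)=\{0\}\cup\big(\lambda(L^{(1)})\setminus\{0\}\big)\cup\cdots\cup\big(\lambda(L^{(M)})\setminus\{0\}\big), \] and among all the eigenvalues of $L$ (the $N^{(1)}$ eigenvalues counted with algebraic multiplicity) exactly one equals $0$.
   Context: Hierarchical structure. Fix an integer $M\ge 2$ (number of layers) and positive integers $N^{(1)},\dots,N^{(M)}$; set $N^{(M+1)}:=1$. For each $l\in\{1,\dots,M\}$ the $N^{(l)}$ nodes of layer $l$ are partitioned into $N^{(l+1)}$ groups $G^{(l)}_1,\dots,G^{(l)}_{N^{(l+1)}}$ of sizes $k^{(l)}_p\ge 1$ (so $\sum_p k^{(l)}_p=N^{(l)}$), numbered consecutively: group $G^{(l)}_p$ consists of the nodes $\sum_{m<p}k^{(l)}_m+1,\dots,\sum_{m\le p}k^{(l)}_m$ of layer $l$. For $l\le M-1$, group $G^{(l)}_p$ is the subordinate group of node $p$ of layer $l+1$. Each group $G^{(l)}_p$ carries a connected undirected graph with binary (0/1) adjacency matrix; $L^{(l)}_p\in\mathbb{R}^{k^{(l)}_p\times k^{(l)}_p}$ is its Laplacian (diagonal degree matrix minus adjacency matrix), and $L^{(l)}_D=\mathrm{diag}(L^{(l)}_1,\dots,L^{(l)}_{N^{(l+1)}})\in\mathbb{R}^{N^{(l)}\times N^{(l)}}$ (block diagonal). Weights: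 fix positive constants $a_1,\dots,a_{N^{(1)}}$; set $a^{(1)}_i=a_i$ and recursively $a^{(l+1)}_p=\sum_{i\in G^{(l)}_p}a^{(l)}_i$. Let $K^{(l)}=\mathrm{diag}(a^{(l)}_1,\dots,a^{(l)}_{N^{(l)}})^{-1}$. For $l=1,\dots,M-1$: $B^{(l)}=\mathrm{diag}(\mathbf{1}_{k^{(l)}_1},\dots,\mathbf{1}_{k^{(l)}_{N^{(l+1)}}})\in\mathbb{R}^{N^{(l)}\times N^{(l+1)}}$ (block diagonal, $\mathbf{1}_k$ the all-ones column vector of length $k$), and $C^{(l)}=\mathrm{diag}(C^{(l)}_1,\dots,C^{(l)}_{N^{(l+1)}})\in\mathbb{R}^{N^{(l+1)}\times N^{(l)}}$ (block diagonal), where each $C^{(l)}_p\in\mathbb{R}^{1\times k^{(l)}_p}$ is a row vector with nonnegative entries summing to $1$. Define $L^{(1)}=K^{(1)}L^{(1)}_D$ and, for $l=2,\dots,M$, $L^{(l)}=B^{(1)}B^{(2)}\cdots B^{(l-1)}\,K^{(l)}L^{(l)}_D\,C^{(l-1)}\cdots C^{(2)}C^{(1)}$; all are $N^{(1)}\times N^{(1)}$. $\lambda(A)$ denotes the set of eigenvalues of a square matrix $A$. *)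

From HB Require Import structures.
From mathcomp Require Import all_boot all_order all_algebra.
From mathcomp Require Import complex.
Set Implicit Arguments. Unset Strict Implicit. Unset Printing Implicit Defensive.
Import Order.TTheory GRing.Theory Num.Theory.
Local Open Scope ring_scope.

(* Layers are indexed 1..M as in the paper; N l is the number of nodes of
   layer l (the value N 0 is irrelevant).  @g l i is the group (= node of
   layer l+1) containing node i of layer l. *)

Section Hier.
Variable R : rcfType.
Variable N : nat -> nat.
Variable g : forall l : nat, 'I_(N l) -> 'I_(N l.+1).

Definition consecutive_groups (l : nat) : Prop :=
  (forall i j : 'I_(N l), (i <= j)%N -> (@g l i <= @g l j)%N) /\
  (forall p : 'I_(N l.+1), exists i, @g l i = p).

Definition group_graphs_ok (l : nat) (adj : rel 'I_(N l)) : Prop :=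
  (forall i j, adj i j = adj j i) /\
  (forall i j, adj i j -> @g l i = @g l j) /\
  (forall i j, @g l i = @g l j -> connect adj i j).

Definition lapD (l : nat) (adj : rel 'I_(N l)) : 'M[R]_(N l) :=
  \matrix_(i, j) ((i == j)%:R * (#|[pred k | adj i k]|)%:R - (adj i j)%:R).

Definition Bmat (l : nat) : 'M[R]_(N l, N l.+1) :=
  \matrix_(i, p) (@g l i == p)%:R.

Definition C_ok (l : nat) (C : 'M[R]_(N l.+1, N l)) : Prop :=
  (forall p i, @g l i != p -> C p i = 0) /\
  (forall p i, 0 <= C p i) /\
  (forall p, \sum_i C p i = 1).

Variable a : 'I_(N 1%N) -> R.

Fixpoint weight (l : nat) : 'I_(N l.+1) -> R :=
  match l as l0 return 'I_(N l0.+1) -> R with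
  | 0 => a
  | l'.+1 => fun p => \sum_(i | @g l'.+1 i == p) @weight l' i
  end.

Definition Kmat (l : nat) : 'M[R]_(N l.+1) :=
  diag_mx (\row_i (@weight l i)^-1).

Fixpoint Bprod (l : nat) : 'M[R]_(N 1%N, N l.+1) :=
  match l as l0 return 'M[R]_(N 1%N, N l0.+1) with
  | 0 => 1%:M
  | l'.+1 => Bprod l' *m Bmat l'.+1
  end.

Variable C : forall l : nat, 'M[R]_(N l.+1, N l).

Fixpoint Cprod (l : nat) : 'M[R]_(N l.+1, N 1%N) :=
  match l as l0 return 'M[R]_(N l0.+1, N 1%N) with
  | 0 => 1%:M
  | l'.+1 => C l'.+1 *m Cprod l'
  end.

Variable adj : forall l : nat, rel 'I_(N l).

(* Llayer l = L^(l+1) of the paper *)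
Definition Llayer (l : nat) : 'M[R]_(N 1%N) :=
  Bprod l *m Kmat l *m lapD (@adj l.+1) *m Cprod l.

End Hier.

Definition spec (R : rcfType) (n : nat) (A : 'M[R]_n) : pred R[i] :=
  fun z => eigenvalue (map_mx (real_complex R) A) z.

(* Write X^(l) = K^(l) L_D^(l), so that
   L^(l) = B^(1)...B^(l-1) X^(l) C^(l-1)...C^(1).  Because C B = 1 and
   L_D B = 0, Sylvester's determinant identity gives
   char (X + B T C) * x^m = char T * char X.  Peeling off the layers one at a
   time yields char L * x^(N^(2) + ... + N^(M)) = prod_l char X^(l), and also
   char L^(l) * x^(N^(l)) = char X^(l) * x^(N^(1)); so L and the L^(l) have the
   nonzero eigenvalues of the X^(l).  Moreover 0 is a root of char X^(l) of
   multiplicity exactly N^(l+1), the number of groups of layer l: the left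
   kernel of a Laplacian with connected groups consists of the vectors that are
   constant on groups, which makes X^(l) - B C nonsingular for an averaging
   matrix C.  Counting the multiplicity of 0 then leaves N^(M+1) = 1 for L. *)

From HB Require Import structures.
From mathcomp Require Import all_boot all_order all_algebra.
From mathcomp Require Import complex.
From mathcomp Require Import ring.
Import Order.TTheory GRing.Theory Num.Theory.
Local Open Scope ring_scope.

Set Implicit Arguments.
Unset Strict Implicit.
Unset Printing Implicit Defensive.

Lemma det_sylvester (S : comNzRingType) n m
    (A : 'M[S]_(n, m)) (B : 'M[S]_(m, n)) :
  \det (1%:M + A *m B) = \det (1%:M + B *m A).
Proof.
have lower : block_mx 1%:M A (- B) 1%:M =
    block_mx (1%:M + A *m B) A 0 1%:M *m block_mx 1%:M 0 (- B) 1%:M.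
  rewrite mulmx_block !(mulmx1, mul1mx, mulmx0, mul0mx, addr0, add0r).
  by rewrite mulmxN addrK.
have upper : block_mx 1%:M A (- B) 1%:M =
    block_mx 1%:M 0 (- B) 1%:M *m block_mx 1%:M A 0 (1%:M + B *m A).
  rewrite mulmx_block !(mulmx1, mul1mx, mulmx0, mul0mx, addr0, add0r).
  by rewrite mulNmx addrCA addNr addr0.
have := congr1 determinant lower.
rewrite upper !det_mulmx !det_ublock !det_lblock !det1 !mulr1 !mul1r.
by move->.
Qed.

(* F D := Y (1 - B C) + B D C is multiplicative in D up to the constant
   det (F 1), by Sylvester's identity; Y = F E and Y - B T C = F (E - T). *)
Lemma det_sub_lift (S : comNzRingType) n m (Y : 'M[S]_n)
    (B : 'M[S]_(n, m)) (C : 'M[S]_(m, n)) (E T : 'M[S]_m) :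
  C *m B = 1%:M -> Y *m B = B *m E ->
  \det (Y - B *m T *m C) * \det E = \det (E - T) * \det Y.
Proof.
move=> CB YB.
pose F (D : 'M[S]_m) := Y *m (1%:M - B *m C) + B *m D *m C.
have F1B : F 1%:M *m B = B.
  rewrite /F mulmx1 mulmxDl -!mulmxA CB mulmx1 mulmxBl mul1mx -mulmxA CB mulmx1.
  by rewrite subrr mulmx0 add0r.
have detF D : \det (F D) = \det (F 1%:M) * \det D.
  have -> : F D = F 1%:M *m (1%:M + B *m ((D - 1%:M) *m C)).
    rewrite mulmxDr mulmx1 mulmxA F1B /F mulmxBl mulmxBr mulmx1 !mulmxA.
    by rewrite mulmxBr mul1mx !mulmxA mulmx1 -[RHS]addrA [B *m C + _]addrC subrK.
  by rewrite det_mulmx det_sylvester -mulmxA CB mulmx1 addrC subrK.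
have FE : Y = F E by rewrite /F mulmxBr mulmx1 mulmxA YB subrK.
have FET : Y - B *m T *m C = F (E - T).
  by rewrite /F mulmxBr mulmx1 mulmxA YB mulmxBr mulmxBl addrA subrK.
by rewrite FET (detF (E - T)) [in RHS]FE (detF E) mulrCA mulrA.
Qed.

Lemma char_poly_scalar (S : comNzRingType) n (c : S) :
  char_poly (c%:M : 'M_n) = ('X - c%:P) ^+ n.
Proof.
rewrite char_poly_trig ?scalar_mx_is_trig //.
by under eq_bigr do rewrite mxE eqxx; rewrite prodr_const card_ord.
Qed.

Lemma char_polyD_lift (S : comNzRingType) n m (X : 'M[S]_n)
    (B : 'M[S]_(n, m)) (C : 'M[S]_(m, n)) (T : 'M[S]_m) :
  C *m B = 1%:M -> X *m B = 0 ->
  char_poly (X + B *m T *m C) * 'X^m = char_poly T * char_poly X.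
Proof.
move=> CB XB; rewrite /char_poly -(@det_scalar _ m 'X).
have -> : char_poly_mx (X + B *m T *m C) =
    char_poly_mx X - map_mx polyC B *m map_mx polyC T *m map_mx polyC C.
  by rewrite /char_poly_mx map_mxD !map_mxM opprD addrA.
apply: det_sub_lift; first by rewrite -map_mxM CB map_scalar_mx.
rewrite /char_poly_mx mulmxBl -map_mxM XB map_mx0 subr0.
by rewrite mul_scalar_mx mul_mx_scalar.
Qed.

Lemma char_poly_lift (S : comNzRingType) n m
    (B : 'M[S]_(n, m)) (C : 'M[S]_(m, n)) (T : 'M[S]_m) :
  C *m B = 1%:M -> char_poly (B *m T *m C) * 'X^m = char_poly T * 'X^n.
Proof.
move=> CB; have := char_polyD_lift T CB (mul0mx n B).
have zero_scalar : (0 : 'M[S]_n) = 0%:M by rewrite raddf0.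
by rewrite add0r zero_scalar char_poly_scalar subr0.
Qed.

Lemma char_poly_neq0 (S : nzRingType) n (A : 'M[S]_n) : char_poly A != 0.
Proof. exact/monic_neq0/char_poly_monic. Qed.

Lemma root_char_poly0 (S : idomainType) n (A : 'M[S]_n) :
  root (char_poly A) 0 = (\det A == 0).
Proof. by rewrite /root horner_coef0 char_poly_det mulf_eq0 signr_eq0. Qed.

Lemma root_mulXn (S : idomainType) (p : {poly S}) k z :
  z != 0 -> root (p * 'X^k) z = root p z.
Proof.
by move=> z0; rewrite rootM /root hornerXn expf_eq0 (negbTE z0) andbF orbF.
Qed.

Lemma mup0_Xn (F : fieldType) n : mup 0 ('X^n : {poly F}) = n.
Proof. by have := mup_XsubCX n (0 : F) 0; rewrite subr0 eqxx. Qed.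

Lemma mup_prod (F : fieldType) x n (P : 'I_n -> {poly F}) :
  (forall i, P i != 0) ->
  mup x (\prod_(i < n) P i) = (\sum_(i < n) mup x (P i))%N.
Proof.
elim: n P => [|n IH] P P0; first by rewrite !big_ord0 mupNroot ?root1.
by rewrite !big_ord_recr /= mupM ?IH //; apply/prodf_neq0 => i _.
Qed.

Section Hierarchy.
Variables (R : rcfType) (N : nat -> nat).

Lemma Bprod_shift (g : forall l, 'I_(N l) -> 'I_(N l.+1)) l :
  Bprod R g l.+1 = Bmat R g 1 *m Bprod R (N := N \o succn) (fun k => g k.+1) l.
Proof.
elim: l => [|l IH]; first by rewrite /= mul1mx mulmx1.
by rewrite -[Bprod R g l.+2]/(Bprod R g l.+1 *m _) IH -mulmxA.
Qed.

Lemma Cprod_shift (C : forall l, 'M[R]_(N l.+1, N l)) l :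
  Cprod C l.+1 = Cprod (N := N \o succn) (fun k => C k.+1) l *m C 1%N.
Proof.
elim: l => [|l IH]; first by rewrite /= mul1mx mulmx1.
by rewrite -[Cprod C l.+2]/(C l.+2 *m Cprod C l.+1) IH mulmxA.
Qed.

End Hierarchy.

(* Layers 2..M form a hierarchy of their own (N, g, C shifted by one), and
   the sum over layers 1..M is X 0 + B_1 S C_1 with S the sum for that one. *)
Lemma char_poly_sum_layers (R : rcfType) M (N : nat -> nat)
    (g : forall l, 'I_(N l) -> 'I_(N l.+1)) (C : forall l, 'M[R]_(N l.+1, N l))
    (X : forall l, 'M[R]_(N l.+1)) :
  (0 < M)%N ->
  (forall l, (l.+1 < M)%N ->
     C l.+1 *m Bmat R g l.+1 = 1%:M /\ X l *m Bmat R g l.+1 = 0) ->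
  char_poly (\sum_(l < M) Bprod R g l *m X l *m Cprod C l)
    * 'X^(\sum_(l < M.-1) N l.+2) = \prod_(l < M) char_poly (X l).
Proof.
elim: M N g C X => [//|[|M] IH] N g C X _ hBC.
  by rewrite !big_ord1 big_ord0 expr0 mulr1 /= mul1mx mulmx1.
pose tail_sum := \sum_(l < M.+1) Bprod R (N := N \o succn) (fun k => g k.+1) l
   *m X l.+1 *m Cprod (N := N \o succn) (fun k => C k.+1) l.
have sumE : \sum_(l < M.+2) Bprod R g l *m X l *m Cprod C l =
    X 0%N + Bmat R g 1 *m tail_sum *m C 1%N.
  rewrite big_ord_recl mulmx_sumr mulmx_suml; congr (_ + _).
    by rewrite /= mul1mx mulmx1.
  by apply: eq_bigr => l _; rewrite lift0 Bprod_shift Cprod_shift !mulmxA.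
have [CB XB] := hBC 0%N isT.
have IHsub := IH (N \o succn) (fun k => g k.+1) (fun k => C k.+1)
  (fun k => X k.+1) isT (fun l hl => hBC l.+1 hl).
rewrite sumE /= big_ord_recl exprD mulrA char_polyD_lift // big_ord_recl.
under eq_bigr do rewrite lift0; under [in RHS]eq_bigr do rewrite lift0.
by rewrite mulrAC IHsub mulrC.
Qed.

Lemma natr_card (S : pzSemiRingType) (T : finType) (P : pred T) :
  #|[pred k | P k]|%:R = \sum_k (P k)%:R :> S.
Proof.
rewrite -sumr_const big_mkcond /=.
by apply: eq_bigr => k _; rewrite inE; case: (P k).
Qed.

Section WeightedLaplacian.
Variables (R : rcfType) (N : nat -> nat) (g : forall l, 'I_(N l) -> 'I_(N l.+1)).
Variables (l : nat) (e : rel 'I_(N l)).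
Hypothesis e_sym : forall i j, e i j = e j i.
Hypothesis e_in_group : forall i j, e i j -> @g l i = @g l j.
Hypothesis e_connects_group : forall i j, @g l i = @g l j -> connect e i j.

Local Notation B := (Bmat R g l).

Lemma C_ok_mulmx_Bmat (C : 'M[R]_(N l.+1, N l)) : C_ok g C -> C *m B = 1%:M.
Proof.
move=> [C_out [_ C_sum]]; apply/matrixP => p q; rewrite !mxE.
have [<-|pq] := eqVneq p q.
  rewrite -(C_sum p); apply: eq_bigr => i _; rewrite mxE.
  by case: eqP => [_|/eqP/C_out->]; rewrite ?mulr1 ?mul0r.
rewrite big1 // => i _; rewrite mxE.
have [gi|] := eqVneq (@g l i) q; last by rewrite mulr0.
by rewrite C_out ?mul0r // gi eq_sym.
Qed.

Lemma lapD_mulmx_Bmat : lapD R e *m B = 0.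
Proof.
apply/matrixP => i q; rewrite !mxE.
under eq_bigr do rewrite !mxE mulrBl.
rewrite sumrB (bigD1 i) //= eqxx mul1r big1 ?addr0; last first.
  by move=> j /negbTE; rewrite eq_sym => ->; rewrite !mul0r.
rewrite natr_card mulr_suml; apply/eqP; rewrite subr_eq0.
apply/eqP/eq_bigr => j _.
by case e_ij: (e i j); rewrite ?mul0r // (e_in_group e_ij).
Qed.

Lemma row_mulmx_lapD (u : 'rV[R]_(N l)) i :
  (u *m lapD R e) 0 i = \sum_j (e i j)%:R * (u 0 i - u 0 j).
Proof.
rewrite mxE; under eq_bigr do rewrite mxE mulrBr.
under [RHS]eq_bigr do rewrite mulrBr.
rewrite !sumrB; congr (_ - _); last by apply: eq_bigr => j _; rewrite e_sym mulrC.
rewrite (bigD1 i) //= eqxx mul1r [X in _ + X]big1 ?addr0; last first.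
  by move=> j /negbTE ji; rewrite ji mul0r mulr0.
by rewrite natr_card mulr_sumr; apply: eq_bigr => j _; rewrite mulrC.
Qed.

(* By symmetry of e, the energy sum_(i,j) e_ij (u_i - u_j)^2 splits into two
   sums of u_k times the k-th entry of u L; so it vanishes, termwise. *)
Lemma lapD_kernel_edge (u : 'rV[R]_(N l)) i j :
  u *m lapD R e = 0 -> e i j -> u 0 i = u 0 j.
Proof.
move=> uL0 e_ij.
have flux k : \sum_m (e k m)%:R * (u 0 k - u 0 m) = 0.
  by rewrite -row_mulmx_lapD uL0 mxE.
pose energy k m := (e k m)%:R * (u 0 k - u 0 m) ^+ 2.
have energy_ge0 k m : 0 <= energy k m by rewrite mulr_ge0 ?ler0n ?sqr_ge0.
have energy0 : \sum_k \sum_j energy k j = 0.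
  have split_energy k m : energy k m =
      (e k m)%:R * (u 0 k - u 0 m) * u 0 k - (e k m)%:R * (u 0 k - u 0 m) * u 0 m.
    by rewrite /energy; ring.
  under eq_bigr do rewrite (eq_bigr _ (fun m _ => split_energy _ m)) sumrB
    -mulr_suml flux mul0r sub0r.
  rewrite sumrN exchange_big big1 ?oppr0 // => k _; rewrite -mulr_suml.
  have -> : \sum_m (e m k)%:R * (u 0 m - u 0 k) =
      - \sum_m (e k m)%:R * (u 0 k - u 0 m).
    by rewrite -sumrN; apply: eq_bigr => m _; rewrite e_sym; ring.
  by rewrite flux oppr0 mul0r.
have row_energy0 : \sum_j energy i j = 0.
  by apply: (psumr_eq0P (P := predT) _ energy0) => // k _; apply: sumr_ge0.
have /eqP : energy i j = 0.
  by apply: (psumr_eq0P (P := predT) _ row_energy0) => // m _.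
by rewrite /energy e_ij mul1r sqrf_eq0 subr_eq0 => /eqP.
Qed.

Lemma lapD_kernel_group (u : 'rV[R]_(N l)) i j :
  u *m lapD R e = 0 -> @g l i = @g l j -> u 0 i = u 0 j.
Proof.
move=> uL0 gij.
have closed_level : closed e [pred k | u 0 k == u 0 i].
  by move=> x y e_xy; rewrite !inE (lapD_kernel_edge uL0 e_xy).
have := closed_connect closed_level (e_connects_group gij).
by rewrite !inE eqxx => /esym/eqP.
Qed.

Variable w : 'I_(N l) -> R.
Hypothesis w_gt0 : forall i, 0 < w i.

Local Notation W := (diag_mx (\row_i (w i)^-1)).

(* A left null vector v of W L - B C is killed by B (multiply on the right by
   B), so v W is in the left kernel of L, i.e. constant on groups; then
   v B = 0 forces these constants to vanish since the weights are positive. *)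
Lemma det_weighted_lapD_sub (C : 'M[R]_(N l.+1, N l)) :
  C *m B = 1%:M -> \det (W *m lapD R e - B *m C) != 0.
Proof.
move=> CB; apply/det0P => -[v v_neq0 hv].
have vB : v *m B = 0.
  move/(congr1 (mulmx^~ B)): hv => /=.
  rewrite mul0mx mulmxBr mulmxBl -!mulmxA lapD_mulmx_Bmat CB !mulmx0 mulmx1.
  by rewrite sub0r => /eqP; rewrite oppr_eq0 => /eqP.
have uL0 : (v *m W) *m lapD R e = 0.
  move/eqP: hv; rewrite mulmxBr mulmxA subr_eq0 mulmxA vB mul0mx.
  by rewrite -mulmxA => /eqP.
have vE j : v 0 j = (v *m W) 0 j * w j.
  by rewrite mul_mx_diag !mxE -mulrA mulVf ?mulr1 ?lt0r_neq0.
move/eqP: v_neq0; apply; apply/rowP => i; rewrite mxE.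
have group_sum_gt0 : 0 < \sum_j w j * (@g l j == @g l i)%:R.
  rewrite (bigD1 i) //= eqxx mulr1; apply: lt_le_trans (w_gt0 i) _.
  by rewrite lerDl sumr_ge0 // => j _; rewrite mulr_ge0 ?ler0n ?ltW.
have : (v *m B) 0 (@g l i) =
    (v *m W) 0 i * \sum_j w j * (@g l j == @g l i)%:R.
  rewrite mxE mulr_sumr; apply: eq_bigr => j _; rewrite mxE vE.
  have [gji|] := eqVneq (@g l j) (@g l i); last by rewrite !mulr0.
  by rewrite (lapD_kernel_group uL0 gji) mulrA.
rewrite vB mxE => /esym/eqP; rewrite mulf_eq0 (gt_eqF group_sum_gt0) orbF.
by rewrite vE => /eqP->; rewrite mul0r.
Qed.

Hypothesis g_surj : forall p, exists i, @g l i = p.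

Definition group_mean : 'M[R]_(N l.+1, N l) :=
  \matrix_(p, i) ((@g l i == p)%:R / #|[pred j | @g l j == p]|%:R).

Lemma C_ok_group_mean : C_ok g group_mean.
Proof.
split; [|split] => [p i /negbTE gip | p i | p]; rewrite ?mxE ?gip ?mul0r //.
  by rewrite divr_ge0 ?ler0n.
under eq_bigr do rewrite mxE.
rewrite -mulr_suml -natr_card mulfV // pnatr_eq0 -lt0n.
by have [i gi] := g_surj p; apply/card_gt0P; exists i; rewrite inE gi.
Qed.

(* Taking T = -1 in char_polyD_lift compares char_poly (W L) with that of the
   nonsingular W L - B C. *)
Lemma mup0_char_poly_weighted_lapD :
  mup 0 (char_poly (W *m lapD R e)) = N l.+1.
Proof.
have CB := C_ok_mulmx_Bmat C_ok_group_mean.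
have XB : W *m lapD R e *m B = 0 by rewrite -mulmxA lapD_mulmx_Bmat mulmx0.
have := char_polyD_lift (-1)%:M CB XB.
rewrite char_poly_scalar mul_mx_scalar scaleN1r mulNmx => /(congr1 (mup 0)).
rewrite !mupM ?char_poly_neq0 ?expf_neq0 ?polyX_eq0 ?polyXsubC_eq0 //.
rewrite mup0_Xn mup_XsubCX.
rewrite mupNroot ?root_char_poly0 ?det_weighted_lapD_sub //.
by rewrite oppr_eq0 oner_eq0 add0n => ->.
Qed.

End WeightedLaplacian.

Section Layers.
Variables (R : rcfType) (N : nat -> nat) (g : forall l, 'I_(N l) -> 'I_(N l.+1)).

Lemma weight_gt0 (a : 'I_(N 1%N) -> R) l :
  (forall i, 0 < a i) ->
  (forall k, (0 < k <= l)%N -> forall p, exists i, @g k i = p) ->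
  forall p : 'I_(N l.+1), 0 < weight g a p.
Proof.
move=> a_gt0; elim: l => [|l IH] g_surj p; first exact: a_gt0.
have [j gj] := g_surj l.+1 (leqnn _) p.
have w_gt0 (i : 'I_(N l.+1)) : 0 < weight g a i.
  by apply: IH => k /andP[k_gt0 kl]; apply: g_surj; rewrite k_gt0 ltnW.
rewrite /= (bigD1 j) /=; last by rewrite gj.
by rewrite ltr_wpDr ?sumr_ge0 // => i _; rewrite ltW.
Qed.

Lemma Cprod_mulmx_Bprod (C : forall l, 'M[R]_(N l.+1, N l)) l :
  (forall k, (0 < k <= l)%N -> C_ok g (C k)) -> Cprod C l *m Bprod R g l = 1%:M.
Proof.
elim: l => [|l IH] C_ok_le; first by rewrite /= mulmx1.
rewrite -[Cprod C l.+1]/(C l.+1 *m Cprod C l).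
rewrite -[Bprod R g l.+1]/(Bprod R g l *m Bmat R g l.+1).
rewrite mulmxA -[_ *m Bprod R g l]mulmxA.
rewrite IH ?mulmx1; first exact: C_ok_mulmx_Bmat (C_ok_le l.+1 (leqnn _)).
by move=> k /andP[k_gt0 kl]; apply: C_ok_le; rewrite k_gt0 ltnW.
Qed.

End Layers.

Lemma spec_root_char_poly (R : rcfType) n (A : 'M[R]_n) z :
  spec A z = root (map_poly (real_complex R) (char_poly A)) z.
Proof. by rewrite /spec /= eigenvalue_root_char map_char_poly. Qed.

Lemma root_map_mulXn (F K : idomainType) (f : {rmorphism F -> K})
    (p : {poly F}) k z :
  z != 0 -> root (map_poly f (p * 'X^k)) z = root (map_poly f p) z.
Proof. by move=> z0; rewrite rmorphM /= map_polyXn root_mulXn. Qed.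

Section Hierarchical.
Local Unset Implicit Arguments.
Variables (R : rcfType) (M : nat) (N : nat -> nat).
Variables (g : forall l, 'I_(N l) -> 'I_(N l.+1)) (adj : forall l, rel 'I_(N l)).
Variables (a : 'I_(N 1%N) -> R) (C : forall l, 'M[R]_(N l.+1, N l)).
Hypothesis M_gt0 : (0 < M)%N.
Hypothesis hg : forall l, (1 <= l <= M)%N -> consecutive_groups g l.
Hypothesis hadj : forall l, (1 <= l <= M)%N -> group_graphs_ok g (adj l).
Hypothesis ha : forall i, 0 < a i.
Hypothesis hC : forall l, (1 <= l < M)%N -> C_ok g (C l).

Definition reduced_layer l : 'M[R]_(N l.+1) := Kmat g a l *m lapD R (adj l.+1).

Local Notation X := reduced_layer.
Local Notation Ll := (Llayer g a C adj).
Local Notation L := (\sum_(l < M) Ll l).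

Lemma LlayerE l : Ll l = Bprod R g l *m X l *m Cprod C l.
Proof. by rewrite /Llayer !mulmxA. Qed.

Lemma char_poly_Lsum :
  char_poly L * 'X^(\sum_(l < M.-1) N l.+2) = \prod_(l < M) char_poly (X l).
Proof.
under eq_bigr do rewrite LlayerE.
apply: char_poly_sum_layers => // l lM.
have [_ [e_in_group _]] := hadj l.+1 (ltnW lM).
split; first exact: C_ok_mulmx_Bmat (hC l.+1 lM).
by rewrite -mulmxA lapD_mulmx_Bmat ?mulmx0.
Qed.

Lemma mup0_char_poly_reduced_layer l :
  (l < M)%N -> mup 0 (char_poly (X l)) = N l.+2.
Proof.
move=> lM; have [e_sym [e_in_group e_conn]] := hadj l.+1 lM.
have [_ g_surj] := hg l.+1 lM.
apply: (mup0_char_poly_weighted_lapD e_sym e_in_group e_conn _ g_surj).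
apply: weight_gt0 => // k /andP[k_gt0 kl].
by have [] := hg k; rewrite ?k_gt0 ?(leq_trans kl (ltnW lM)).
Qed.

Lemma char_poly_Llayer l :
  (l < M)%N -> char_poly (Ll l) * 'X^(N l.+1) = char_poly (X l) * 'X^(N 1%N).
Proof.
move=> lM; rewrite LlayerE char_poly_lift // Cprod_mulmx_Bprod //.
move=> k /andP[k_gt0 kl].
by apply: hC; rewrite k_gt0 (leq_ltn_trans kl lM).
Qed.

Hypothesis hNM : N M.+1 = 1%N.

Lemma mup0_char_poly_Lsum : mup 0 (char_poly L) = 1%N.
Proof.
have sum_split : \sum_(l < M) N l.+2 = (\sum_(l < M.-1) N l.+2 + N M.+1)%N.
  by case: (M) M_gt0 => // M' _; rewrite big_ord_recr.
have := congr1 (mup 0) char_poly_Lsum.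
rewrite mupM ?char_poly_neq0 ?expf_neq0 ?polyX_eq0 // mup0_Xn.
rewrite mup_prod => [|l]; last exact: char_poly_neq0.
have mup0_X (l : 'I_M) := mup0_char_poly_reduced_layer l (ltn_ord l).
rewrite (eq_bigr _ (fun l _ => mup0_X l)).
by rewrite sum_split hNM addnC => /addnI.
Qed.

Lemma spec_Lsum z :
  spec L z <-> z = 0 \/ exists l : 'I_M, z != 0 /\ spec (Ll l) z.
Proof.
rewrite spec_root_char_poly; have [-> | z0] := eqVneq z 0.
  split=> [_ | _]; first by left.
  rewrite -(rmorph0 (real_complex R)) fmorph_root -dvdp_XsubCl.
  by rewrite XsubC_dvd ?char_poly_neq0 ?mup0_char_poly_Lsum.
have root_X (l : 'I_M) :
    root (map_poly (real_complex R) (char_poly (X l))) z = spec (Ll l) z.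
  rewrite spec_root_char_poly -(root_map_mulXn _ _ (N 1%N) z0).
  by rewrite -char_poly_Llayer // root_map_mulXn.
rewrite -(root_map_mulXn _ _ (\sum_(l < M.-1) N l.+2) z0) char_poly_Lsum.
rewrite rmorph_prod /root horner_prod.
split => [/prodf_eq0[l _ root_l] | [z_eq0 | [l [_]]]].
- by right; exists l; rewrite -root_X.
- by rewrite z_eq0 eqxx in z0.
- by rewrite -root_X => root_l; apply/prodf_eq0; exists l.
Qed.

End Hierarchical.

Theorem theorem1 (R : rcfType) (M : nat) (hM : (2 <= M)%N)
  (N : nat -> nat) (hNM : N M.+1 = 1%N)
  (g : forall l : nat, 'I_(N l) -> 'I_(N l.+1))
  (hg : forall l, (1 <= l <= M)%N -> consecutive_groups g l)
  (adj : forall l : nat, rel 'I_(N l))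
  (hadj : forall l, (1 <= l <= M)%N -> group_graphs_ok g (adj l))
  (a : 'I_(N 1%N) -> R) (ha : forall i, 0 < a i)
  (C : forall l : nat, 'M[R]_(N l.+1, N l))
  (hC : forall l, (1 <= l < M)%N -> C_ok g (C l)) :
  let Ll := Llayer g a C adj in
  let L := \sum_(l < M) Ll l in
  (forall z : R[i],
     spec L z <->
     (z = 0 \/ exists l : 'I_M, z != 0 /\ spec (Ll l) z))
  /\ mup 0 (char_poly L) = 1%N.
Proof.
have M_gt0 : (0 < M)%N := ltnW hM.
split; first by move=> z; apply: spec_Lsum.
exact: mup0_char_poly_Lsum.
Qed.
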